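(* Let $t$ be a positive integer and let $\mathcal{B}$ be a bramble of order at least $2t+1$ in a graph $G$. Then there exist (1) two vertex-disjoint paths $P_1$ and $P_2$ in $G$ such that both $\mathcal{B}_{V(P_1)}$ and $\mathcal{B}_{V(P_2)}$ have order exactly $t$, and (2) pairwise vertex-disjoint paths $Q_1,\dots,Q_t$ in $G$, each of which has one endpoint on $P_1$ and one endpoint on $P_2$ and is internally disjoint from $P_1\cup P_2$.
   Context: All graphs are finite and simple. A bramble $\mathcal{B}$ in a graph $G$ is a family of connected subgraphs of $G$ such that every two of them share a vertex or are joined by an edge of $G$. A hitting set for $\mathcal{B}$ is a set of vertices intersecting every element of $\mathcal{B}$; the order of $\mathcal{B}$ is the minimum size of a hitting set. Any subset of a bramble is a bramble. For $X\subseteq V(G)$, $\mathcal{B}_X$ denotes the set of elements of $\mathcal{B}$ that intersect $X$. *)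

From mathcomp Require Import all_boot.
Set Implicit Arguments. Unset Strict Implicit. Unset Printing Implicit Defensive.

Definition simple_graph (T : finType) (e : rel T) : Prop :=
  symmetric e /\ irreflexive e.

Section Bramble.
Variables (T : finType) (e : rel T).

Definition connected_set (S : {set T}) : Prop :=
  S != set0 /\
  forall x y, x \in S -> y \in S ->
    connect (fun u v => [&& e u v, u \in S & v \in S]) x y.

Definition touch (A B : {set T}) : Prop :=
  (A :&: B != set0) \/ (exists x y, [/\ x \in A, y \in B & e x y]).

Definition bramble (B : {set {set T}}) : Prop :=
  (forall H, H \in B -> connected_set H) /\
  (forall H1 H2, H1 \in B -> H2 \in B -> touch H1 H2).

Definition hitting (B : {set {set T}}) (X : {set T}) : bool :=
  [forall H in B, H :&: X != set0].

(* order = minimum size of a hitting set (#|T| is only a default bound,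
   attained by [set: T] for a bramble) *)
Definition border (B : {set {set T}}) : nat :=
  \big[minn/#|T|]_(X : {set T} | hitting B X) #|X|.

Definition bsub (B : {set {set T}}) (X : {set T}) : {set {set T}} :=
  [set H in B | H :&: X != set0].

Definition gpath (p : seq T) : Prop :=
  match p with
  | [::] => False
  | x :: r => path e x r && uniq p
  end.

Definition vset (p : seq T) : {set T} := [set x in p].

End Bramble.

From mathcomp Require Import all_boot.
Set Implicit Arguments. Unset Strict Implicit. Unset Printing Implicit Defensive.

(* Some path meets every element of the bramble: grow it greedily towards an
   element it misses.  Along this path the order of B_{V(prefix)} starts at 0,
   grows by at most one per vertex and is subadditive under splitting the path,
   so a prefix P1 has order exactly t and the remaining path, of order at least
   t + 1, has a prefix P2 of order t.  A set X of fewer than t vertices misses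
   an element of B_{V(P1)} and one of B_{V(P2)}; these touch, so X does not
   separate V(P1) from V(P2).  Menger's theorem then yields t disjoint connected
   V(P1)-V(P2) subgraphs, and each contains a path Q_i as required. *)

Section Walks.
Variable T : finType.
Implicit Types (r : rel T) (R V W Y Z : {set T}).

Definition avoid r Y : rel T := fun a b => [&& r a b, a \notin Y & b \notin Y].
Definition induced r W : rel T := fun a b => [&& r a b, a \in W & b \in W].

Lemma avoid_sym r Y : symmetric r -> symmetric (avoid r Y).
Proof. by move=> sr a b; rewrite /avoid sr [(a \notin Y) && _]andbC. Qed.

Lemma induced_sym r W : symmetric r -> symmetric (induced r W).
Proof. by move=> sr a b; rewrite /induced sr [(a \in W) && _]andbC. Qed.

Lemma induced_subrel r r' W : subrel r r' -> subrel (induced r W) (induced r' W).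
Proof. by move=> sub a b /and3P[/sub rab aW bW]; rewrite /induced rab aW. Qed.

Lemma induced_subset r V W : V \subset W -> subrel (induced r V) (induced r W).
Proof. by move=> /subsetP VW a b /and3P[rab /VW aW /VW bW]; rewrite /induced rab aW. Qed.

Lemma sub_connect r r' x y : subrel r r' -> connect r x y -> connect r' x y.
Proof. by move=> sub; apply: connect_sub => a b /sub/connect1. Qed.

Lemma connect_stable r W x y : (forall a b, r a b -> a \in W -> b \in W) ->
  x \in W -> connect r x y -> y \in W.
Proof.
move=> rW + /connectP[p rp ->]; elim: p x rp => //= z p IH x /andP[rxz rp] xW.
exact: IH rp (rW x z rxz xW).
Qed.

Lemma avoid_connect_notin r Y x y : connect (avoid r Y) x y -> x \notin Y -> y \notin Y.
Proof.
move=> cxy xY; rewrite -in_setC; apply: connect_stable _ _ cxy; last by rewrite inE.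
by move=> a b /and3P[_ _]; rewrite !inE.
Qed.

Lemma connect_first r x y : connect r x y -> x = y \/ exists z, r x z.
Proof.
by move=> /connectP[[|z p] /= rp ->]; [left | right; exists z; case/andP: rp].
Qed.

Lemma connect_last r x y : connect r x y -> x = y \/ exists z, r z y.
Proof.
move=> /connectP[p]; case/lastP: p => [_ -> | p z]; first by left.
by rewrite rcons_path last_rcons => /andP[_ rpz] ->; right; exists (last x p).
Qed.

Lemma connect_first_hit r Z x y : connect r x y ->
  (exists2 z, z \in Z & connect [rel v w | r v w && (v \notin Z)] x z) \/
  (x \notin Z /\ connect (avoid r Z) x y).
Proof.
move=> /connectP[p rp ->]; elim: p x rp => [|z p IH] x /=.
  by move=> _; case: (boolP (x \in Z)) => xZ; [left; exists x | right].
case/andP=> rxz rp; case: (boolP (x \in Z)) => xZ; first by left; exists x.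
case: (IH z rp) => [[w wZ czw] | [zZ czy]].
  by left; exists w => //; apply: connect_trans czw; apply: connect1; rewrite /= rxz.
by right; split=> //; apply: connect_trans czy; apply: connect1; rewrite /avoid rxz xZ.
Qed.

Lemma connect_stop r Y x z : connect [rel v w | r v w && (v \notin Y)] x z ->
  connect [rel v w | [&& r v w, v \notin Y & (w \notin Y) || (w == z)]] x z.
Proof.
move=> /connectP[p rp ->]; elim: p x rp => //= y p IH x /andP[/andP[rxy xY] rp].
apply: connect_trans (IH y rp); apply: connect1 => /=; rewrite rxy xY /=.
by case: p rp {IH} => [|w p] /=; [rewrite eqxx orbT | case/andP=> /andP[_ ->]].
Qed.

Lemma connect_avoid_sources r Y x z : connect [rel v w | r v w && (v \notin Y)] x z ->
  z \notin Y -> x \notin Y /\ connect (avoid r Y) x z.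
Proof.
move=> cxz zY; split; first by case: (connect_first cxz) => [->|[y /andP[]]].
apply: sub_connect (connect_stop cxz) => v w /and3P[rvw vY /orP[wY|/eqP wz]];
  by rewrite /avoid rvw vY ?wz.
Qed.

Lemma connect_reachable r x z : connect r x z ->
  connect (induced r [set v | connect r x v]) x z.
Proof.
move=> /connectP[p]; elim/last_ind: p z => [|p y IH] z /=; first by move=> _ ->.
rewrite rcons_path last_rcons => /andP[rp ry] ->.
apply: connect_trans (IH _ rp erefl) (connect1 _); rewrite /induced !inE ry /=.
apply/andP; split; first by apply/connectP; exists p.
by apply/connectP; exists (rcons p y); rewrite ?rcons_path ?rp ?ry ?last_rcons.
Qed.

Lemma connect_exit r R x y : connect r x y -> x \in R -> y \notin R ->
  exists u w, [/\ u \in R, w \notin R & r u w].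
Proof.
move=> /connectP[p rp ->]; elim: p x rp => [|z p IH] x /=; first by move=> _ ->.
case/andP=> rxz rp xR; case: (boolP (z \in R)) => [zR | zR _]; first exact: IH.
by exists x, z.
Qed.

Lemma connect_avoid_start r x y : connect r x y ->
  connect [rel v w | r v w && (w != x)] x y.
Proof.
move=> /connectP[p rp ->]; case: (shortenP rp) => q rq /andP[xq _] _.
apply/connectP; exists q => //; move: {1 3}x rq; elim: q xq {rp} => //= z q IH.
by rewrite inE negb_or eq_sym => /andP[zx xq] a /andP[raz rq]; rewrite raz zx IH.
Qed.

End Walks.

Section Menger.
Variable T : finType.
Implicit Types (e : rel T) (A B S X Y W : {set T}).

Definition separates e A B X :=
  forall a b, a \in A -> b \in B -> a \notin X -> ~~ connect (avoid e X) a b.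

Definition separatesb e A B X :=
  [forall a in A, forall b in B, (a \in X) || ~~ connect (avoid e X) a b].

Lemma separatesP e A B X : reflect (separates e A B X) (separatesb e A B X).
Proof.
apply: (iffP forall_inP) => [sX a b aA bB aX | sX a aA].
  by have /forall_inP/(_ b bB) := sX a aA; rewrite (negbTE aX).
by apply/forall_inP => b bB; rewrite -implyNb; apply/implyP; exact: sX.
Qed.

Lemma separates_sym e A B X : symmetric e -> separates e A B X -> separates e B A X.
Proof.
move=> se sX b a bB aA bX; apply/negP => cba.
have aX := avoid_connect_notin cba bX.
by move: cba; rewrite (sym_connect_sym (avoid_sym X se)); apply/negP/sX.
Qed.

Definition reach e X A :=
  [set v | [exists a in A, (a \notin X) && connect (avoid e X) a v]].

Lemma mem_reach e X A a : a \in A -> a \notin X -> a \in reach e X A.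
Proof. by move=> aA aX; rewrite inE; apply/exists_inP; exists a; rewrite ?aX ?connect0. Qed.

Lemma reach_notin e X A v : v \in reach e X A -> v \notin X.
Proof. by rewrite inE => /exists_inP[a _ /andP[aX /avoid_connect_notin]]; apply. Qed.

Lemma reach_step e X A v w : v \in reach e X A -> avoid e X v w -> w \in reach e X A.
Proof.
rewrite !inE => /exists_inP[a aA /andP[aX cav]] vw; apply/exists_inP; exists a => //.
by rewrite aX (connect_trans cav (connect1 vw)).
Qed.

Lemma separates_reach_disjoint e A B X : symmetric e -> separates e A B X ->
  [disjoint reach e X A & reach e X B].
Proof.
move=> se sX; rewrite disjoint_subset; apply/subsetP => v.
rewrite !inE => /exists_inP[a aA /andP[aX cav]]; apply/negP => /exists_inP[b bB /andP[_ cbv]].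
move: (sX a b aA bB aX); rewrite (connect_trans cav) //.
by rewrite (sym_connect_sym (avoid_sym X se)).
Qed.

Definition linked e A B W := exists a b,
  [/\ a \in A, b \in B, a \in W, b \in W & connect (induced e W) a b].

(* Menger's theorem is proved for disjoint connected vertex sets rather than
   for paths; the paths are extracted at the very end by [path_of_linked]. *)
Definition linkage e A B k (W : 'I_k -> {set T}) :=
  (forall i, linked e A B (W i)) /\ (forall i j, i != j -> [disjoint W i & W j]).

Lemma linkage_sub e e' A B k (L : 'I_k -> {set T}) :
  subrel e' e -> linkage e' A B L -> linkage e A B L.
Proof.
move=> sub [lL dL]; split=> // i; have [a [b [aA bB aL bL cab]]] := lL i.
by exists a, b; split=> //; apply: sub_connect cab; exact: induced_subrel.
Qed.

Lemma menger_edgeless e A B k : (forall a b, ~~ e a b) ->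
  (forall X, separates e A B X -> k <= #|X|) -> exists L : 'I_k -> {set T}, linkage e A B L.
Proof.
move=> ne /(_ (A :&: B)) kAB; have {}kAB : k <= #|A :&: B|.
  apply: kAB => a b aA bB; rewrite inE aA /= => aB; apply/negP.
  by case/connect_first=> [ab | [c]]; [move: aB; rewrite ab bB | rewrite /avoid (negbTE (ne _ _))].
pose s := enum (A :&: B).
have iS (i : 'I_k) : i < size s by rewrite -cardE (leq_trans _ kAB).
case: k kAB iS => [|k] kAB iS; first by exists (fun _ => set0); split=> -[].
have [a0 _] : exists a0, a0 \in A :&: B by apply/card_gt0P; exact: leq_trans kAB.
exists (fun i => [set nth a0 s i]); split=> [i | i j ij].
  have : nth a0 s i \in A :&: B by rewrite -mem_enum mem_nth.
  by rewrite inE => /andP[sA sB]; exists (nth a0 s i), (nth a0 s i); rewrite !inE eqxx connect0.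
by rewrite disjoints1 inE (nth_uniq _ (iS i) (iS j) (enum_uniq _)).
Qed.

Lemma separates_extend e e' A B S u u' : symmetric e' -> subrel e' e ->
  (forall v w, e v w -> ~~ e' v w -> (v == u) || (v == u')) ->
  separates e' A B S -> u' \in reach e' S B ->
  forall X, separates e' A (u |: S) X -> separates e A B X.
Proof.
move=> se' sub bad sepS u'RB X sepX a b aA bB aX; apply/negP => cab.
pose Z := u |: (u' |: S).
have e'_off v w : e v w -> v \notin Z -> e' v w.
  by move=> evw; apply: contraR => /(bad v w evw); rewrite !inE => /orP[]->; rewrite ?orbT.
have [[z zZ caz] | [aZ cab']] := connect_first_hit Z cab; last first.
  have aS : a \notin S by apply: contra aZ; rewrite !inE => ->; rewrite !orbT.
  move: (sepS a b aA bB aS); apply/negP/negPn; apply: sub_connect cab'.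
  move=> v w /and3P[/and3P[evw _ _] vZ wZ]; rewrite /avoid (e'_off v w evw vZ).
  by move: vZ wZ; rewrite !inE => /norP[_ /norP[_ ->]] /norP[_ /norP[_ ->]].
have [zuS | zuS] := boolP (z \in u |: S).
  move: (sepX a z aA zuS aX); apply/negP/negPn; apply: sub_connect caz.
  by move=> v w /andP[/and3P[evw vX wX] vZ]; rewrite /avoid e'_off ?vX.
have zu' : z = u'.
  by move: zZ zuS; rewrite !inE; case/or3P=> [->|/eqP//|->]; rewrite ?orbT.
have [aS caz'] : a \notin S /\ connect (avoid e' S) a z.
  apply: connect_avoid_sources; last by rewrite zu' (reach_notin u'RB).
  apply: sub_connect caz => v w /andP[/and3P[evw _ _] vZ]; rewrite /= e'_off //.
  by apply: contra vZ; rewrite !inE => ->; rewrite !orbT.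
move: u'RB; rewrite -zu' inE => /exists_inP[b0 b0B /andP[_ cb0z]].
move: (sepS a b0 aA b0B aS); apply/negP/negPn; apply: connect_trans caz' _.
by rewrite (sym_connect_sym (avoid_sym S se')).
Qed.

Lemma linked_trim e A X Y W : Y \subset X -> linked e A X W ->
  exists W' z a, [/\ W' \subset W, a \in A :&: W', W' :&: X = [set z],
    connect (induced e W') a z & W' :\: Y \subset reach e Y A].
Proof.
move=> YX [a [b [aA bX aW bW cab]]].
have [[z zX caz] | [aX cab']] := connect_first_hit X cab; last first.
  case: (connect_last cab') => [ab | [v /and3P[_ _]]]; last by rewrite bX.
  by move: aX; rewrite ab bX.
pose R := [rel v w | [&& induced e W v w, v \notin X & (w \notin X) || (w == z)]].
have cz : connect R a z := connect_stop caz.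
exists [set v | connect R a v], z, a; split.
- apply/subsetP => v; rewrite inE; apply: connect_stable aW.
  by move=> v' w /and3P[/and3P[_ _ ->]].
- by rewrite !inE aA connect0.
- apply/setP => v; rewrite !inE; apply/andP/eqP => [[cv vX] | ->]; last by rewrite cz zX.
  case: (connect_last cv) => [av | [w /and3P[_ _ /orP[]]]]; [|by rewrite vX|by move/eqP].
  case: (connect_first cz) => [az | [c /and3P[_ aX _]]]; first by rewrite -av.
  by rewrite av vX in aX.
- apply: sub_connect (connect_reachable cz).
  by apply: induced_subrel => v w /and3P[/and3P[]].
- apply/subsetP => v; rewrite !inE => /andP[vY cv]; apply/exists_inP; exists a => //.
  have cv' : connect [rel v w | e v w && (v \notin Y)] a v.
    apply: sub_connect cv => v' w /and3P[/and3P[evw _ _] vX _]; rewrite /= evw.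
    by apply: contra vX; apply: (subsetP YX).
  by have [-> ->] := connect_avoid_sources cv' vY.
Qed.

Lemma disjoint_choice_inj k (W : 'I_k -> {set T}) (z : 'I_k -> T) :
  (forall i j, i != j -> [disjoint W i & W j]) -> (forall i, z i \in W i) -> injective z.
Proof.
move=> dW zW i j zij; apply/eqP; apply: contraTT (zW j) => ij.
by rewrite -zij (disjointFr (dW i j ij) (zW i)).
Qed.

Lemma inj_card_onto k (f : 'I_k -> T) X : injective f -> (forall i, f i \in X) ->
  #|X| <= k -> forall x, x \in X -> exists i, f i = x.
Proof.
move=> injf fX cX x; have sX : f @: setT \subset X by apply/subsetP => _ /imsetP[i _ ->].
have /eqP <- : f @: setT == X by rewrite eqEcard sX card_imset // cardsT card_ord.
by case/imsetP=> i _ ->; exists i.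
Qed.

Lemma linked_join e A B V1 V2 a1 a2 z1 z2 :
  a1 \in A :&: V1 -> a2 \in B :&: V2 -> z1 \in V1 -> z2 \in V2 -> (z1 == z2) || e z1 z2 ->
  connect (induced e V1) a1 z1 -> connect (induced e V2) z2 a2 -> linked e A B (V1 :|: V2).
Proof.
rewrite !inE => /andP[a1A a1V] /andP[a2B a2V] z1V z2V z12 c1 c2.
exists a1, a2; rewrite !inE a1A a2B a1V a2V orbT; split=> //.
apply: connect_trans (sub_connect (induced_subset (subsetUl V1 V2)) c1) _.
apply: connect_trans _ (sub_connect (induced_subset (subsetUr V1 V2)) c2).
case/orP: z12 => [/eqP-> | ez]; first exact: connect0.
by apply: connect1; rewrite /induced ez !inE z1V z2V orbT.
Qed.

Lemma match_ends k (z z' : 'I_k -> T) u u' S : u' \notin S -> injective z -> injective z' ->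
  (forall i, z i \in u |: S) -> (forall j, z' j \in u' |: S) -> #|u' |: S| <= k ->
  exists2 sg : 'I_k -> 'I_k, injective sg & forall i, z' (sg i) = if z i == u then u' else z i.
Proof.
move=> u'S z_inj z'_inj zX z'X cardk.
have zS i : z i != u -> z i \in S by case/setU1P: (zX i) => [->|]; rewrite ?eqxx.
have tauX i : (if z i == u then u' else z i) \in u' |: S.
  by case: ifP => [_|/negbT/zS ziS]; rewrite !inE ?eqxx ?ziS ?orbT.
have /fin_all_exists[sg sgP] : forall i, exists j, z' j = if z i == u then u' else z i.
  by move=> i; exact: inj_card_onto z'_inj z'X cardk _ (tauX i).
exists sg => // i j /(congr1 z'); rewrite !sgP.
have [ziu|/zS ziS] := eqVneq (z i) u; have [zju|/zS zjS] := eqVneq (z j) u.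
- by move=> _; apply: z_inj; rewrite ziu zju.
- by move=> E; rewrite E zjS in u'S.
- by move=> E; rewrite -E ziS in u'S.
- exact: z_inj.
Qed.

Lemma linkage_trim e A X Y k (L : 'I_k -> {set T}) : Y \subset X -> linkage e A X L ->
  exists (V : 'I_k -> {set T}) (z a : 'I_k -> T), injective z /\
    forall i, [/\ V i \subset L i, a i \in A :&: V i, V i :&: X = [set z i],
                 connect (induced e (V i)) (a i) (z i) & V i :\: Y \subset reach e Y A].
Proof.
move=> YX [lL dL].
have /fin_all_exists[V /fin_all_exists[z /fin_all_exists[a H]]] :=
  fun i => linked_trim YX (lL i).
exists V, z, a; split=> [|//]; apply: (disjoint_choice_inj dL) => i.
have [/subsetP VL _ E _ _] := H i; apply: VL.
by have /setIP[] : z i \in V i :&: X by rewrite E set11.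
Qed.

Lemma linkage_glue e e' A B S u u' k (WA WB : 'I_k -> {set T}) :
  symmetric e' -> subrel e' e -> e u u' -> separates e' A B S ->
  u \in reach e' S A -> u' \in reach e' S B -> #|u' |: S| <= k ->
  linkage e' A (u |: S) WA -> linkage e' B (u' |: S) WB ->
  exists L : 'I_k -> {set T}, linkage e A B L.
Proof.
move=> se' sub euu' sepS uRA u'RB cardk LA LB.
have [VA [z [a [z_inj HA]]]] := linkage_trim (subsetUr [set u] S) LA.
have [VB [z' [b [z'_inj HB]]]] := linkage_trim (subsetUr [set u'] S) LB.
have zA i v : v \in VA i -> v \in u |: S -> v = z i.
  by have [_ _ E _ _] := HA i; move=> vA vX; apply/set1P; rewrite -E inE vA.
have zB i v : v \in VB i -> v \in u' |: S -> v = z' i.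
  by have [_ _ E _ _] := HB i; move=> vB vX; apply/set1P; rewrite -E inE vB.
have zX i : z i \in VA i :&: (u |: S) by have [_ _ -> _ _] := HA i; rewrite set11.
have z'X i : z' i \in VB i :&: (u' |: S) by have [_ _ -> _ _] := HB i; rewrite set11.
(* The piece ending at z i is glued to the one ending at z i, or at u' if z i = u. *)
have [sg sg_inj sgP] := match_ends (reach_notin u'RB) z_inj z'_inj
  (fun i => (setIP (zX i)).2) (fun j => (setIP (z'X j)).2) cardk.
have mixed i j v : v \in VA i -> v \in VB (sg j) -> i = j.
  move=> vA vB; have [vS | vS] := boolP (v \in S).
    have vX : v \in u |: S by rewrite inE vS orbT.
    have vX' : v \in u' |: S by rewrite inE vS orbT.
    move: (sgP j); rewrite -(zB _ v vB vX'); case: ifP => [_ vu'|_ vzj].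
      by move: (reach_notin u'RB); rewrite -vu' vS.
    by apply: z_inj; rewrite -(zA i v vA vX).
  have vRA : v \in reach e' S A by have [_ _ _ _ /subsetP] := HA i; apply; rewrite !inE vS.
  have vRB : v \in reach e' S B by have [_ _ _ _ /subsetP] := HB (sg j); apply; rewrite !inE vS.
  by rewrite (disjointFr (separates_reach_disjoint se' sepS) vRA) in vRB.
exists (fun i => VA i :|: VB (sg i)); split=> [i | i j ij].
  have [_ aAV _ cA _] := HA i; have [_ bBV _ cB _] := HB (sg i).
  have [/setIP[ziV _] /setIP[z'iV _]] := (zX i, z'X (sg i)).
  rewrite (sym_connect_sym (induced_sym _ se')) in cB.
  apply: (linked_join aAV bBV ziV z'iV);
    [|exact: sub_connect (induced_subrel sub) cA | exact: sub_connect (induced_subrel sub) cB].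
  by rewrite sgP; have [->|_] := eqVneq (z i) u; rewrite ?euu' ?orbT ?eqxx.
have sij : sg i != sg j by apply: contra ij => /eqP/sg_inj->.
have [[VAi _ _ _ _] [VAj _ _ _ _]] := (HA i, HA j).
have [[VBi _ _ _ _] [VBj _ _ _ _]] := (HB (sg i), HB (sg j)).
apply/pred0P => v /=; apply/negbTE/andP => -[]; rewrite !inE => /orP[vi|vi] /orP[vj|vj].
- by rewrite (disjointFr (disjointW VAi VAj (LA.2 i j ij)) vi) in vj.
- by move: ij; rewrite (mixed i j v vi vj) eqxx.
- by move: ij; rewrite (mixed j i v vj vi) eqxx.
- by rewrite (disjointFr (disjointW VBi VBj (LB.2 _ _ sij)) vi) in vj.
Qed.

Definition edges e := [set p : T * T | e p.1 p.2].

Definition del_edge e x y : rel T :=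
  fun a b => e a b && ~~ ((a == x) && (b == y) || (a == y) && (b == x)).

Lemma del_edge_sub e x y : subrel (del_edge e x y) e.
Proof. by move=> a b /andP[]. Qed.

Lemma del_edge_sym e x y : symmetric e -> symmetric (del_edge e x y).
Proof.
move=> se a b; rewrite /del_edge se; congr (_ && ~~ _).
by rewrite orbC [(b == x) && _]andbC [(b == y) && _]andbC.
Qed.

Lemma card_edges_del e x y : e x y -> #|edges (del_edge e x y)| < #|edges e|.
Proof.
move=> exy; apply: proper_card; apply/properP; split.
  by apply/subsetP => p; rewrite !inE => /del_edge_sub.
by exists (x, y); rewrite !inE //= /del_edge !eqxx andbF.
Qed.

Lemma del_edge_cross e x y A B S : symmetric e -> e x y ->
  separates (del_edge e x y) A B S -> ~ separates e A B S ->
  exists u u', [/\ u \in reach (del_edge e x y) S A, u' \in reach (del_edge e x y) S B,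
    e u u' & forall v w, e v w -> ~~ del_edge e x y v w -> (v == u) || (v == u')].
Proof.
set e' := del_edge e x y => se exy sepS /separatesP /forall_inPn[a aA /forall_inPn[b bB]].
rewrite negb_or negbK => /andP[aS cab].
have se' : symmetric e' := del_edge_sym x y se.
have dR := separates_reach_disjoint se' sepS.
have aRA := mem_reach e' aA aS; have bRB := mem_reach e' bB (avoid_connect_notin cab aS).
have exit (R : {set T}) a' b' : a' \in R -> b' \notin R -> connect (avoid e S) a' b' ->
    (forall v w, v \in R -> avoid e' S v w -> w \in R) ->
    exists2 v, v \in R & (v == x) || (v == y).
  move=> aR bR cab' Rstep; have [v [w [vR wR vw]]] := connect_exit cab' aR bR.
  exists v => //; move: vw wR; rewrite /avoid => /and3P[evw vS wS].
  apply: contraR => /norP[vx vy]; apply: Rstep vR _.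
  by rewrite /avoid vS wS /e' /del_edge evw (negbTE vx) (negbTE vy).
have [u uRA uxy] := exit _ a b aRA (negbT (disjointFl dR bRB)) cab (@reach_step e' S A).
have cba : connect (avoid e S) b a by rewrite (sym_connect_sym (avoid_sym S se)).
have [u' u'RB u'xy] := exit _ b a bRB (negbT (disjointFr dR aRA)) cba (@reach_step e' S B).
have uu' : u != u' by apply: contraTneq u'RB => <-; rewrite (disjointFr dR uRA).
exists u, u'; split=> //.
  by move: uxy u'xy uu'; do 2!case/orP=> /eqP->; rewrite ?eqxx // se.
move=> v w evw; rewrite /e' /del_edge evw negbK => /orP[]/andP[/eqP-> _];
  by move: uxy u'xy uu'; do 2!case/orP=> /eqP->; rewrite ?eqxx ?orbT.
Qed.

Theorem menger e A B k : symmetric e -> (forall X, separates e A B X -> k <= #|X|) ->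
  exists L : 'I_k -> {set T}, linkage e A B L.
Proof.
have [n] := ubnP #|edges e|; elim: n => // n IH in e A B k *; rewrite ltnS => ne se H.
have [[x y] exy | noedge] := pickP [pred p : T * T | e p.1 p.2]; last first.
  by apply: menger_edgeless H => a b; have /= -> := noedge (a, b).
set e' := del_edge e x y; have sub : subrel e' e := @del_edge_sub e x y.
have se' : symmetric e' := del_edge_sym x y se.
have ne' : #|edges e'| < n := leq_trans (card_edges_del exy) ne.
have [/existsP[S /andP[/separatesP sepS ltS]] | noS] :=
  boolP [exists S : {set T}, separatesb e' A B S && (#|S| < k)]; last first.
  have [X /separatesP sX | L /(linkage_sub sub) lL] := IH e' A B k ne' se'; last by exists L.
  by rewrite leqNgt; apply: contra noS => ltX; apply/existsP; exists X; rewrite sX.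
(* S separates A from B in G - xy but not in G, so xy joins the parts u, u' of
   G - xy - S reached from A and from B.  A set separating A from S + u, or B
   from S + u', in G - xy separates A from B in G; hence G - xy has linkages
   from A to S + u and from B to S + u', and these are glued through uu'. *)
have nsep : ~ separates e A B S by move/H; rewrite leqNgt ltS.
have [u [u' [uRA u'RB euu' bad]]] := del_edge_cross se exy sepS nsep.
have bad' v w : e v w -> ~~ e' v w -> (v == u') || (v == u).
  by move=> evw /(bad v w evw); rewrite orbC.
have [WA LA] := IH e' A (u |: S) k ne' se'
  (fun X sX => H X (separates_extend se' sub bad sepS u'RB sX)).
have [WB LB] := IH e' B (u' |: S) k ne' se'
  (fun X sX => H X (separates_sym se
                       (separates_extend se' sub bad' (separates_sym se' sepS) uRA sX))).
have cardS' : #|u' |: S| <= k by rewrite cardsU1 (reach_notin u'RB).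
exact: linkage_glue se' sub euu' sepS uRA u'RB cardS' LA LB.
Qed.

End Menger.

Lemma nat_ivt (f : nat -> nat) n m : f 0 = 0 -> (forall j, j < n -> f j.+1 <= (f j).+1) ->
  m <= f n -> exists2 j, j <= n & f j = m.
Proof.
move=> f0; elim: n => [|n IH] fS mn; first by exists 0; move: mn; rewrite f0 leqn0 => /eqP.
have [mfn | fnm] := leqP m (f n).
  by have [j jn fj] := IH (fun j jn => fS j (ltnW jn)) mfn; exists j => //; exact: ltnW.
by exists n.+1 => //; apply/eqP; rewrite eqn_leq mn andbT (leq_trans (fS n _)).
Qed.

Section BrambleOrder.
Variable T : finType.
Implicit Types (B : {set {set T}}) (X Y : {set T}).

Lemma hittingP B X : reflect (forall H, H \in B -> H :&: X != set0) (hitting B X).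
Proof. exact: forall_inP. Qed.

Lemma border_le B X : hitting B X -> border B <= #|X|.
Proof.
move=> hX; rewrite /border; have : X \in index_enum {set T} := mem_index_enum X.
elim: (index_enum _) => // Y r IH; rewrite inE big_cons => /predU1P[<-|Xr].
  by rewrite hX geq_minl.
by case: ifP => _; [apply: leq_trans (geq_minr _ _) (IH Xr) | exact: IH].
Qed.

Lemma border_attained B X : hitting B X -> exists2 Y, hitting B Y & #|Y| = border B.
Proof.
move=> hX; pose K m := m = #|T| \/ exists2 Y, hitting B Y & #|Y| = m.
have [bT | //] : K (border B).
  apply: (big_ind K); [by left | move=> m n Km Kn | by move=> Y hY; right; exists Y].
  by rewrite /minn; case: ltnP.
by exists X => //; apply/eqP; rewrite eqn_leq border_le //= bT max_card.
Qed.

Lemma hitting_bsub B X : hitting (bsub B X) X.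
Proof. by apply/hittingP => H; rewrite inE => /andP[]. Qed.

Lemma bsub_hitting B X : hitting B X -> bsub B X = B.
Proof. by move/hittingP => hX; apply/setP => H; rewrite inE andb_idr //; exact: hX. Qed.

Lemma border_bsub0 B : border (bsub B set0) = 0.
Proof.
apply/eqP; rewrite -leqn0 -(cards0 T); apply: border_le.
by apply/hittingP => H; rewrite inE setI0 eqxx andbF.
Qed.

Lemma hitting_bsubU B X1 X2 Y1 Y2 : hitting (bsub B X1) Y1 -> hitting (bsub B X2) Y2 ->
  hitting (bsub B (X1 :|: X2)) (Y1 :|: Y2).
Proof.
move=> /hittingP h1 /hittingP h2; apply/hittingP => H.
rewrite inE setIUr setU_eq0 negb_and => /andP[HB /orP[] nX].
  by rewrite setIUr setU_eq0 negb_and h1 // inE HB.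
by rewrite setIUr setU_eq0 negb_and h2 ?orbT // inE HB.
Qed.

Lemma border_bsubU1 B X x : border (bsub B (x |: X)) <= (border (bsub B X)).+1.
Proof.
have [Y hY <-] := border_attained (hitting_bsub B X).
apply: leq_trans (border_le (hitting_bsubU (hitting_bsub B [set x]) hY)) _.
by rewrite cardsU cards1 add1n leq_subr.
Qed.

Lemma border_le_bsubU B X1 X2 : hitting B (X1 :|: X2) ->
  border B <= border (bsub B X1) + border (bsub B X2).
Proof.
move=> hX; have [Y1 h1 <-] := border_attained (hitting_bsub B X1).
have [Y2 h2 <-] := border_attained (hitting_bsub B X2).
rewrite -{1}(bsub_hitting hX); apply: leq_trans (border_le (hitting_bsubU h1 h2)) _.
by rewrite cardsU leq_subr.
Qed.

End BrambleOrder.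

Section Paths.
Variable T : finType.
Implicit Types (e R : rel T) (A B W : {set T}) (s : seq T).

Lemma vset_rcons s x : vset (rcons s x) = x |: vset s.
Proof. by apply/setP => v; rewrite !inE mem_rcons inE. Qed.

Lemma vset_cat s1 s2 : vset (s1 ++ s2) = vset s1 :|: vset s2.
Proof. by apply/setP => v; rewrite !inE mem_cat. Qed.

Lemma border_bsub_take (B : {set {set T}}) s t : t <= border (bsub B (vset s)) ->
  exists2 j, j <= size s & border (bsub B (vset (take j s))) = t.
Proof.
move=> ts; apply: nat_ivt; rewrite ?take_size //.
  by rewrite take0 /vset set_nil border_bsub0.
move=> j js; have x0 : T by move: js; case: (s) => [|x].
by rewrite (take_nth x0 js) vset_rcons border_bsubU1.
Qed.

Lemma gpath_uniq e s : gpath e s -> uniq s.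
Proof. by case: s => // x s /andP[]. Qed.

Lemma gpath_take e s n : gpath e s -> 0 < n -> gpath e (take n s).
Proof.
case: s => // x s; case: n => // n /andP[xs us] _.
have /= -> := take_uniq n.+1 us; rewrite andbT.
by move: xs; rewrite -{1}(cat_take_drop n s) cat_path => /andP[].
Qed.

Lemma gpath_drop e s n : gpath e s -> n < size s -> gpath e (drop n s).
Proof.
elim: n s => [|n IH] s; first by rewrite drop0.
case: s => // x [|y s] //= gs lt; apply: IH => //.
by move: gs; rewrite /gpath /= => /andP[/andP[_ ->]] /andP[_ ->].
Qed.

Lemma path_trim R A B a s : [disjoint A & B] -> a \in A -> path R a s -> last a s \in B ->
  exists a' m b, [/\ a' \in A, b \in B, path R a' (rcons m b) &
                   all [predC A :|: B] m].
Proof.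
(* [m] is the part of the walk after its last visit to [A] *)
move=> dAB aA; rewrite -[s]/([::] ++ s); move: [::] (isT : all [predC A :|: B] [::]).
elim: s a aA => [|c s IH] a aA m; rewrite ?cats0.
  case/lastP: m => [_ _ /= aB|m z]; first by rewrite (disjointFr dAB aA) in aB.
  by rewrite all_rcons last_rcons !inE => /andP[zAB _] _ zB; rewrite zB orbT in zAB.
rewrite -cat_rcons cat_path last_cat last_rcons => mAB /andP[am cs] csB.
have [cA | ncA] := boolP (c \in A); first by apply: (IH c cA [::]).
have [cB | ncB] := boolP (c \in B); first by exists a, m, c.
apply: (IH a aA (rcons m c));
  by rewrite ?all_rcons ?cat_path ?last_cat ?last_rcons ?inE ?negb_or ?ncA ?ncB ?am.
Qed.

Lemma path_induced_sub e W x s : path (induced e W) x s -> {subset s <= W}.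
Proof.
elim: s x => //= y s IH x /andP[/and3P[_ _ yW] ys] v.
by rewrite inE => /predU1P[->|]; [exact: yW | exact: IH ys v].
Qed.

Lemma path_of_linked e A B W : [disjoint A & B] -> linked e A B W ->
  exists q, [/\ gpath e q, vset q \subset W &
    exists a m b, [/\ q = a :: rcons m b, a \in A, b \in B & [disjoint vset m & A :|: B]]].
Proof.
move=> dAB [a0 [b0 [a0A b0B _ _ /connectP[p pp lst]]]].
have lB : last a0 p \in B by rewrite -lst.
have [a [m [b [aA bB pt mAB]]]] := path_trim dAB a0A pp lB.
have ab : a != b by apply: contraTneq bB => <-; rewrite (disjointFr dAB aA).
have : last a (rcons m b) = b by rewrite last_rcons.
case: (shortenP pt) => q pq uq sub_q; case/lastP: q pq uq sub_q => [_ _ _ /= ba|q y].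
  by rewrite ba eqxx in ab.
rewrite last_rcons => pq uq sub_q yb; subst y.
have aW : a \in W by case: q pq {uq sub_q} => [|v q] /= /andP[/and3P[]].
exists (a :: rcons q b); split.
- by rewrite /gpath uq andbT; apply: sub_path pq => v w /and3P[].
- by apply/subsetP => v; rewrite inE => /predU1P[->|/(path_induced_sub pq)].
exists a, q, b; split=> //; rewrite disjoint_subset; apply/subsetP => v; rewrite inE => vq.
have /sub_q : v \in rcons q b by rewrite mem_rcons inE vq orbT.
rewrite mem_rcons inE => /predU1P[vb|vm]; last by move/allP: mAB => /(_ v vm).
by move: uq; rewrite /= rcons_uniq -vb vq andbF.
Qed.

End Paths.

Section Bramble.
Variables (T : finType) (e : rel T) (B : {set {set T}}).
Hypothesis bB : bramble e B.

Lemma bramble_connect H1 H2 x y : H1 \in B -> H2 \in B -> x \in H1 -> y \in H2 ->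
  connect (induced e (H1 :|: H2)) x y.
Proof.
case: bB => bc bt H1B H2B xH yH.
have [_ c1] := bc H1 H1B; have [_ c2] := bc H2 H2B.
have sub1 := @induced_subset _ e _ _ (subsetUl H1 H2).
have sub2 := @induced_subset _ e _ _ (subsetUr H1 H2).
case: (bt H1 H2 H1B H2B) => [/set0Pn[v /setIP[v1 v2]] | [a [b [aH bH eab]]]].
  exact: connect_trans (sub_connect sub1 (c1 x v xH v1)) (sub_connect sub2 (c2 v y v2 yH)).
apply: connect_trans (sub_connect sub1 (c1 x a xH aH)) _.
apply: connect_trans (connect1 _) (sub_connect sub2 (c2 b y bH yH)).
by rewrite /induced eab !inE aH bH orbT.
Qed.

Lemma bramble_separator_card A1 A2 X : separates e A1 A2 X ->
  minn (border (bsub B A1)) (border (bsub B A2)) <= #|X|.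
Proof.
move=> sX; rewrite geq_min.
have [/border_le -> // | /forall_inPn[H1]] := boolP (hitting (bsub B A1) X).
rewrite inE => /andP[H1B /set0Pn[a /setIP[aH1 aA1]]]; rewrite negbK setI_eq0 => dH1.
have [/border_le -> | /forall_inPn[H2]] := boolP (hitting (bsub B A2) X); first by rewrite orbT.
rewrite inE => /andP[H2B /set0Pn[b /setIP[bH2 bA2]]]; rewrite negbK setI_eq0 => dH2.
have HX v : v \in H1 :|: H2 -> v \notin X.
  by case/setUP => [/(disjointFr dH1) | /(disjointFr dH2)] ->.
case/negP: (sX a b aA1 bA2 (HX a (subsetP (subsetUl H1 H2) a aH1))).
apply: sub_connect (bramble_connect H1B H2B aH1 bH2) => v w /and3P[evw vH wH].
by rewrite /avoid evw !HX.
Qed.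

Definition reaches_unmet x r := forall H, H \in B -> H :&: vset (x :: r) == set0 ->
  exists2 u, u \in H & connect [rel a b | e a b && (b \notin vset (x :: r))] (last x r) u.

Lemma reaches_unmet_extend x r : gpath e (x :: r) -> reaches_unmet x r ->
  ~~ hitting B (vset (x :: r)) ->
  exists c, gpath e (x :: rcons r c) /\ reaches_unmet x (rcons r c).
Proof.
move=> gP I /forall_inPn[H HB]; rewrite negbK => nH.
have [u uH /connectP[[|c p] /= pp ul]] := I H HB nH.
  by rewrite setI_eq0 in nH; move: (disjointFr nH uH); rewrite ul in_set mem_last.
case/andP: pp => /andP[ec cV] pp.
exists c; split.
  move: gP cV; rewrite /gpath /= rcons_path ec andbT mem_rcons rcons_uniq !inE negb_or.
  by case/and3P=> -> xr -> /andP[cx ->]; rewrite negb_or eq_sym cx xr.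
move=> H' H'B; rewrite last_rcons.
have -> : vset (x :: rcons r c) = c |: vset (x :: r).
  by apply/setP => v; rewrite !inE mem_rcons inE orbCA.
rewrite setIUr setU_eq0 => /andP[_ nH'].
have [u' u'H'] : exists u', u' \in H' by case: bB => /(_ H' H'B)[/set0Pn].
exists u' => //.
have HV v : v \in H :|: H' -> v \notin vset (x :: r).
  rewrite setI_eq0 in nH; rewrite setI_eq0 in nH'.
  by case/setUP => [/(disjointFr nH) | /(disjointFr nH')] ->.
have cu : connect [rel a b | e a b && (b \notin vset (x :: r))] c u'.
  apply: connect_trans (_ : connect _ c u) _; first by apply/connectP; exists p.
  apply: sub_connect (bramble_connect HB H'B uH u'H') => a b /and3P[eab _ bHH'].
  by rewrite /= eab HV.
apply: sub_connect (connect_avoid_start cu) => a b /andP[/andP[eab bV] bc].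
by rewrite /= eab in_setU1 negb_or bc.
Qed.

Lemma hitting_path_from n x r : #|T| < n + size (x :: r) -> gpath e (x :: r) ->
  reaches_unmet x r -> exists2 P, gpath e P & hitting B (vset P).
Proof.
elim: n x r => [|n IH] x r lt gP I.
  by move: lt; rewrite add0n -(card_uniqP (gpath_uniq gP)) ltnNge max_card.
have [hP | nhP] := boolP (hitting B (vset (x :: r))); first by exists (x :: r).
have [c [gP' I']] := reaches_unmet_extend gP I nhP.
by apply: IH gP' I'; rewrite /= size_rcons -addSnnS.
Qed.

Lemma hitting_path : B != set0 -> exists2 P, gpath e P & hitting B (vset P).
Proof.
case/set0Pn => H0 H0B; have [/set0Pn[x xH0] _] := bB.1 H0 H0B.
apply: (@hitting_path_from #|T|.+1 x [::]) => //; first by rewrite addn1 ltnS leqnSn.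
move=> H HB _; have [/set0Pn[u uH] _] := bB.1 H HB; exists u => //=.
apply: sub_connect (connect_avoid_start (bramble_connect H0B HB xH0 uH)).
by move=> a b /andP[/and3P[eab _ _] bx]; rewrite /= eab !inE bx.
Qed.

Lemma bramble_two_paths t : 0 < t -> 2 * t + 1 <= border B ->
  exists P1 P2, [/\ gpath e P1, gpath e P2, [disjoint vset P1 & vset P2],
    border (bsub B (vset P1)) = t & border (bsub B (vset P2)) = t].
Proof.
move=> t0 bord; have tt1 : t + t.+1 <= border B by rewrite -addn1 addnA addnn -mul2n.
have B0 : B != set0.
  apply: contraTneq bord => B0; suff -> : border B = 0 by rewrite addn1.
  apply/eqP; rewrite -leqn0 -(cards0 T); apply: border_le.
  by apply/hittingP => H; rewrite B0 inE.
have [P gP hP] := hitting_path B0.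
have tP : t <= border (bsub B (vset P)) by rewrite bsub_hitting // (leq_trans _ tt1) ?leq_addr.
have [j1 _ b1] := border_bsub_take tP.
set P1 := take j1 P; set R := drop j1 P.
have tR : t <= border (bsub B (vset R)).
  have : hitting B (vset P1 :|: vset R) by rewrite -vset_cat cat_take_drop.
  by move/border_le_bsubU/(leq_trans tt1); rewrite b1 leq_add2l => /ltnW.
have [j2 j2R b2] := border_bsub_take tR.
have take_pos j s : border (bsub B (vset (take j s))) = t -> 0 < j.
  by case: j => //; rewrite take0 /vset set_nil border_bsub0 => t0'; rewrite -t0' in t0.
have j1P : j1 < size P.
  by rewrite -subn_gt0 -size_drop (leq_trans (take_pos _ _ b2) j2R).
exists P1, (take j2 R); split=> //.
- exact: gpath_take gP (take_pos _ _ b1).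
- exact: gpath_take (gpath_drop gP j1P) (take_pos _ _ b2).
- move: (gpath_uniq gP); rewrite -(cat_take_drop j1 P) cat_uniq => /and3P[_ /hasPn PR _].
  by rewrite disjoint_sym disjoint_subset; apply/subsetP => v; rewrite !inE => /mem_take/PR.
Qed.

End Bramble.

Theorem lemma2p5 (T : finType) (e : rel T) (B : {set {set T}}) (t : nat) :
  simple_graph e -> bramble e B -> 0 < t -> 2 * t + 1 <= border B ->
  exists (P1 P2 : seq T) (Q : 'I_t -> seq T),
    [/\ gpath e P1, gpath e P2, [disjoint vset P1 & vset P2],
        border (bsub B (vset P1)) = t & border (bsub B (vset P2)) = t] /\
    [/\ (forall i, gpath e (Q i)),
        (forall i j, i != j -> [disjoint vset (Q i) & vset (Q j)]) &
        (forall i, exists a m b,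
            [/\ Q i = a :: rcons m b, a \in vset P1, b \in vset P2 &
                [disjoint vset m & vset P1 :|: vset P2]])].
Proof.
move=> [se _] bB t0 bord.
have [P1 [P2 [gP1 gP2 dP b1 b2]]] := bramble_two_paths bB t0 bord.
have cut_large X : separates e (vset P1) (vset P2) X -> t <= #|X|.
  by move/(bramble_separator_card bB); rewrite b1 b2 minnn.
have [L [lL dL]] := menger se cut_large.
have /fin_all_exists[Q HQ] := fun i => path_of_linked dP (lL i).
exists P1, P2, Q; split=> //; split=> [i | i j ij | i]; try by case: (HQ i).
have [[_ sQi _] [_ sQj _]] := (HQ i, HQ j).
exact: disjointW sQi sQj (dL i j ij).
Qed.
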